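(* Let $q$ be a prime power, $v\ge 2$, and let $u\in\mathbb{Z}$, $m\ge0$ and $\Delta\ge1$ be integers. Let $\mathcal{C}$ be a set of points of $\mathrm{PG}(v-1,q)$ with $|\mathcal{C}\cap H|\equiv u\pmod{\Delta}$ for every hyperplane $H$ and with cardinality $n=u+m\Delta\ge0$. Then $$(q-1)\cdot\sum_{h\in\mathbb{Z},\,h\le m} h\,a_{u+h\Delta}=\left(u+m\Delta-uq\right)\cdot\frac{q^{v-1}}{\Delta}-m,$$ where $a_i$ denotes the number of hyperplanes $H$ with $|\mathcal{C}\cap H|=i$, and $a_{u+h\Delta}:=0$ whenever $u+h\Delta<0$.
   Context: $\mathrm{PG}(v-1,q)$ is the set of $1$-dimensional subspaces (points) of $\mathbb{F}_q^v$; hyperplanes are the $(v-1)$-dimensional subspaces of $\mathbb{F}_q^v$, and $\mathcal{C}\cap H$ is the set of points of $\mathcal{C}$ contained in $H$. *)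

From HB Require Import structures.
From mathcomp Require Import all_boot all_order all_algebra all_field.
Set Implicit Arguments. Unset Strict Implicit. Unset Printing Implicit Defensive.
Import Order.TTheory GRing.Theory Num.Theory.

(* Subspaces of F^v are represented canonically by square matrices A with
   <<A>> = A (mxalgebra's canonical representative of a row space). *)
Section PG.
Variables (F : finFieldType) (v : nat).

Definition is_subspace (A : 'M[F]_v) : bool := (<<A>>%MS == A).

Definition is_point (A : 'M[F]_v) : bool := is_subspace A && (\rank A == 1%N).

Definition is_hyperplane (A : 'M[F]_v) : bool :=
  is_subspace A && (\rank A == v.-1).

Definition capH (C : {set 'M[F]_v}) (H : 'M[F]_v) : {set 'M[F]_v} :=
  [set P in C | (P <= H)%MS].

Definition spec_a (C : {set 'M[F]_v}) (i : nat) : nat :=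
  #|[set H : 'M[F]_v | is_hyperplane H & #|capH C H| == i]|.

Definition spec_aZ (C : {set 'M[F]_v}) (i : int) : nat :=
  match i with Posz n => spec_a C n | Negz _ => 0%N end.

End PG.

(* \sum_{h in Z, h <= m} h * a_{u + h Delta}.  Terms with h < -|u| vanish
   (since Delta >= 1 gives u + h Delta < 0), so the sum is taken over
   h = m, m-1, ..., -|u|. *)
Definition weighted_sum (F : finFieldType) (v : nat) (C : {set 'M[F]_v})
    (u : int) (m Delta : nat) : int :=
  \sum_(0 <= k < m + `|u| + 1)
     ((m%:Z - k%:Z) * (spec_aZ C (u + (m%:Z - k%:Z) * Delta%:Z))%:Z)%R.

From HB Require Import structures.
From mathcomp Require Import all_boot all_order all_algebra all_field.
From mathcomp Require Import zify ring.
Set Implicit Arguments. Unset Strict Implicit. Unset Printing Implicit Defensive.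
Import Order.TTheory GRing.Theory Num.Theory.
Local Open Scope ring_scope.

(* Proof idea: double counting.  Duality S |-> S^perp maps the hyperplanes
   through a subspace S bijectively onto the points of S^perp, so there are
   (q^v - 1)/(q - 1) hyperplanes and each point lies on (q^(v-1) - 1)/(q - 1)
   of them.  Hence (q - 1) sum_i a_i = q^v - 1 and
   (q - 1) sum_i i a_i = n (q^(v-1) - 1).  Writing |C ∩ H| = u + h_H Delta,
   the weighted sum is sum_H h_H = (sum_i i a_i - u sum_i a_i) / Delta. *)

Section Counting.
Variables (F : finFieldType) (n : nat).
Local Notation q := #|F|.

Definition perpmx (A : 'M[F]_n) : 'M[F]_n := <<kermx A^T>>%MS.

Definition hyperplanes_through (S : 'M[F]_n) : {set 'M[F]_n} :=
  [set H | is_hyperplane H && (S <= H)%MS].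

Definition points_of (S : 'M[F]_n) : {set 'M[F]_n} :=
  [set P | is_point P && (P <= S)%MS].

Lemma perpmx_subspace A : is_subspace (perpmx A).
Proof. by rewrite /is_subspace /perpmx genmx_id. Qed.

Lemma is_subspace0 : is_subspace (0 : 'M[F]_n).
Proof. by rewrite /is_subspace genmx0. Qed.

Lemma mxrank_perpmx A : \rank (perpmx A) = (n - \rank A)%N.
Proof. by rewrite /perpmx genmxE mxrank_ker mxrank_tr. Qed.

Lemma sub_kermx_perpmx A : (A <= kermx (perpmx A)^T)%MS.
Proof.
by rewrite sub_kermx -trmx_eq0 trmx_mul trmxK -sub_kermx /perpmx genmxE.
Qed.

Lemma perpmxK {A} : is_subspace A -> perpmx (perpmx A) = A.
Proof.
move=> /eqP defA; rewrite -{2}defA /perpmx; apply/eq_genmx/eqmx_sym/eqmxP.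
rewrite -(mxrank_leqif_eq (sub_kermx_perpmx A)) mxrank_ker mxrank_tr.
by rewrite mxrank_perpmx subKn ?rank_leq_col.
Qed.

Lemma perpmxS A B : (A <= B)%MS -> (perpmx B <= perpmx A)%MS.
Proof.
move=> sAB; have := submx_trans sAB (sub_kermx_perpmx B).
rewrite sub_kermx -trmx_eq0 trmx_mul trmxK -sub_kermx => sBA.
by rewrite [X in (_ <= X)%MS]/perpmx genmxE.
Qed.

Lemma card_row_space m (A : 'M[F]_(m, n)) :
  #|[set x : 'rV[F]_n | (x <= A)%MS]| = (q ^ \rank A)%N.
Proof.
rewrite -[\rank A]mul1n -card_mx.
have injA : injective (@mulmxr _ 1 _ _ (row_base A)).
  have /row_freeP[B baseK] := row_base_free A.
  by apply: (can_inj (g := mulmxr B)) => x; rewrite /= -mulmxA baseK mulmx1.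
rewrite -(card_image injA); apply: eq_card => x.
by rewrite inE -(eq_row_base A) (sameP submxP codomP).
Qed.

Lemma card_row_space_nz (S : 'M[F]_n) :
  #|[set x : 'rV[F]_n | (x <= S)%MS & x != 0]| = (q ^ \rank S - 1)%N.
Proof.
rewrite -card_row_space (cardsD1 0 [set x : 'rV[F]_n | (x <= S)%MS]).
rewrite inE sub0mx add1n subSS subn0.
by apply: eq_card => x; rewrite !inE andbC.
Qed.

(* The nonzero vectors of S are partitioned by the points they span, and each
   point contains q - 1 of them. *)
Lemma card_points_of (S : 'M[F]_n) :
  (q.-1 * #|points_of S| = q ^ \rank S - 1)%N.
Proof.
rewrite -card_row_space_nz -[#|points_of S|]sum1_card -[in RHS]sum1_card.
rewrite (partition_big (fun x : 'rV[F]_n => <<x>>%MS) (mem (points_of S))) /=;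
  last first.
  move=> x; rewrite !inE => /andP[xS nz_x].
  by rewrite /is_point /is_subspace genmx_id eqxx !genmxE rank_rV nz_x.
rewrite mulnC big_distrl /=; apply: eq_bigr => P.
rewrite inE /is_point => /andP[/andP[/eqP defP /eqP rankP] PS].
have -> : q.-1 = #|[set x : 'rV[F]_n | (x <= P)%MS & x != 0]|.
  by rewrite card_row_space_nz rankP expn1 subn1.
rewrite mul1n -sum1_card; apply: eq_bigl => x; rewrite !inE.
apply/idP/idP => [/andP[xP nz_x] | /andP[/andP[_ nz_x] /eqP <-]];
  last by rewrite genmxE submx_refl nz_x.
rewrite (submx_trans xP PS) nz_x /=.
rewrite -defP; apply/eqP/eq_genmx/eqmxP.
by rewrite -(mxrank_leqif_eq xP) rank_rV nz_x rankP.
Qed.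

Lemma perpmx_hyperplanes_through S : is_subspace S -> (0 < n)%N ->
  perpmx @: hyperplanes_through S = points_of (perpmx S).
Proof.
move=> sS n_gt0; apply/setP => Q; rewrite inE.
apply/imsetP/idP => [[H] | /andP[/andP[sQ /eqP rankQ] QS]].
  rewrite inE /is_hyperplane => /andP[/andP[_ /eqP rankH] SH] ->.
  rewrite /is_point perpmx_subspace mxrank_perpmx rankH perpmxS //.
  by rewrite -subn1 subKn.
exists (perpmx Q); last by rewrite perpmxK.
rewrite inE /is_hyperplane perpmx_subspace mxrank_perpmx rankQ subn1 eqxx.
by rewrite -(perpmxK sS) perpmxS.
Qed.

Lemma card_hyperplanes_through S : is_subspace S -> (0 < n)%N ->
  (q.-1 * #|hyperplanes_through S| = q ^ (n - \rank S) - 1)%N.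
Proof.
move=> sS n_gt0; rewrite -mxrank_perpmx -card_points_of.
rewrite -perpmx_hyperplanes_through // card_in_imset // => H1 H2.
rewrite !inE /is_hyperplane => /andP[/andP[sH1 _] _] /andP[/andP[sH2 _] _] eqH.
by rewrite -(perpmxK sH1) eqH perpmxK.
Qed.

End Counting.

(* The only k in range with c = u + (m - k) Delta is k = m - h, where h is
   determined by c = u + h Delta; the bounds on c put it in [0, m + |u|]. *)
Lemma sum_level_indicator (c : nat) (u : int) (m Delta : nat) : (0 < Delta)%N ->
  c%:Z <= u + m%:Z * Delta%:Z -> (c%:Z = u %[mod Delta%:Z])%Z ->
  (\sum_(0 <= k < m + `|u| + 1)
     ((m%:Z - k%:Z) * (c%:Z == u + (m%:Z - k%:Z) * Delta%:Z)%:R)) * Delta%:Z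
  = c%:Z - u.
Proof.
move=> Delta_gt0 c_le /eqP; rewrite eqz_mod_dvd => /dvdzP[h def_c].
pose k0 := `|m%:Z - h|%N.
have def_k0 : k0%:Z = m%:Z - h by rewrite /k0; nia.
have k0_in : k0 \in index_iota 0 (m + `|u| + 1) by rewrite mem_iota; nia.
rewrite (bigD1_seq k0) ?iota_uniq //=.
rewrite big1 ?addr0 => [|k k_neq]; last first.
  case: eqP => [eq_c|]; last by rewrite mulr0.
  have /eqP : (h - (m%:Z - k%:Z)) * Delta%:Z = 0 by lia.
  by rewrite mulf_eq0 => /orP[] /eqP; lia.
have -> : c%:Z == u + (m%:Z - k0%:Z) * Delta%:Z by apply/eqP; lia.
by rewrite def_k0 mulr1 opprB addrC subrK def_c.
Qed.

Section DoubleCounting.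
Variables (F : finFieldType) (v : nat) (C : {set 'M[F]_v}).
Variables (u : int) (m Delta : nat).
Local Notation q := #|F|.
Local Notation hyperplanes := [set H : 'M[F]_v | is_hyperplane H].

Hypothesis v_gt0 : (0 < v)%N.
Hypothesis C_points : forall P, P \in C -> is_point P.
Hypothesis Delta_gt0 : (0 < Delta)%N.
Hypothesis C_mod :
  forall H, is_hyperplane H -> (#|capH C H|%:Z = u %[mod Delta%:Z])%Z.
Hypothesis C_card : #|C|%:Z = u + m%:Z * Delta%:Z.

Lemma card_hyperplanes : (q.-1 * #|hyperplanes| = q ^ v - 1)%N.
Proof.
have := card_hyperplanes_through (@is_subspace0 F v) v_gt0.
rewrite mxrank0 subn0 => <-; congr (_ * _)%N; apply: eq_card => H.
by rewrite !inE sub0mx andbT.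
Qed.

Lemma sum_card_capH :
  (q.-1 * \sum_(H in hyperplanes) #|capH C H| = #|C| * (q ^ v.-1 - 1))%N.
Proof.
have -> : (\sum_(H in hyperplanes) #|capH C H|
           = \sum_(P in C) #|hyperplanes_through P|)%N.
  under eq_bigr do rewrite -sum1_card big_mkcond.
  rewrite exchange_big [RHS]big_mkcond /=; apply: eq_bigr => P _.
  rewrite -sum1_card !big_mkcond /=; case: ifP => PC; last first.
    by rewrite big1 // => H _; rewrite !inE PC; case: ifP.
  rewrite [RHS]big_mkcond; apply: eq_bigr => H _.
  by rewrite !inE PC; case: is_hyperplane.
rewrite big_distrr /= -sum_nat_const; apply: eq_bigr => P.
move=> /C_points /andP[sP /eqP rankP].
by rewrite card_hyperplanes_through // rankP !subn1.
Qed.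

Lemma spec_aZE z :
  (spec_aZ C z)%:Z = \sum_(H in hyperplanes) (#|capH C H|%:Z == z)%:R.
Proof.
case: z => [i|i] /=; last by rewrite big1.
rewrite /spec_a -sum1_card -natz natr_sum big_mkcond [RHS]big_mkcond /=.
by apply: eq_bigr => H _; rewrite !inE eqz_nat; case: is_hyperplane; case: eqP.
Qed.

Lemma weighted_sum_mulD : weighted_sum C u m Delta * Delta%:Z
  = \sum_(H in hyperplanes) (#|capH C H|%:Z - u).
Proof.
rewrite /weighted_sum.
under eq_bigr do rewrite spec_aZE mulr_sumr.
rewrite exchange_big mulr_suml; apply: eq_bigr => H; rewrite inE => H_hyp.
apply: sum_level_indicator => //; last exact: C_mod.
have : (#|capH C H| <= #|C|)%N.
  by apply/subset_leq_card/subsetP => P; rewrite inE => /andP[].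
lia.
Qed.

Lemma weighted_sum_identity :
  (q%:Z - 1) * (weighted_sum C u m Delta * Delta%:Z)
  = (u + m%:Z * Delta%:Z - u * q%:Z) * (q ^ v.-1)%N%:Z - m%:Z * Delta%:Z.
Proof.
have q_gt0 : (0 < q)%N by apply/card_gt0P; exists 0.
have pow_gt0 : (0 < q ^ v.-1)%N by rewrite expn_gt0 q_gt0.
have sum_capH : (q%:Z - 1) * (\sum_(H in hyperplanes) #|capH C H|)%N%:Z
                = #|C|%:Z * ((q ^ v.-1)%N%:Z - 1).
  by have := congr1 Posz sum_card_capH; nia.
have card_hyps : (q%:Z - 1) * #|hyperplanes|%:Z = q%:Z * (q ^ v.-1)%N%:Z - 1.
  have expS : (q ^ v = q * q ^ v.-1)%N by rewrite -expnS prednK.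
  by have := congr1 Posz card_hyperplanes; rewrite expS; nia.
rewrite weighted_sum_mulD sumrB sumr_const -mulr_natr natz.
under eq_bigr do rewrite -natz.
by rewrite -natr_sum natz mulrBr mulrCA card_hyps sum_capH C_card; ring.
Qed.

End DoubleCounting.

Theorem lemma5p3 (F : finFieldType) (v : nat) (u : int) (m Delta : nat)
    (C : {set 'M[F]_v}) :
  (2 <= v)%N -> (1 <= Delta)%N ->
  (forall P, P \in C -> is_point P) ->
  (forall H : 'M[F]_v, is_hyperplane H ->
     (#|capH C H|%:Z = u %[mod Delta%:Z])%Z) ->
  #|C|%:Z = u + m%:Z * Delta%:Z ->
  ((#|F|%:R - 1) * (weighted_sum C u m Delta)%:~R : rat)
    = (u + m%:Z * Delta%:Z - u * #|F|%:Z)%:~R * (#|F| ^ v.-1)%:R / Delta%:R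
      - m%:R.
Proof.
move=> v_ge2 Delta_gt0 C_points C_mod C_card.
have v_gt0 : (0 < v)%N by apply: leq_trans v_ge2.
have Delta_neq0 : (Delta%:R : rat) != 0 by rewrite pnatr_eq0 -lt0n.
have /(congr1 (fun z : int => z%:~R : rat)) :=
  weighted_sum_identity v_gt0 C_points Delta_gt0 C_mod C_card.
rewrite !(intrM, intrD, intrN, =^~pmulrn) => identity.
apply: (mulIf Delta_neq0); rewrite [RHS]mulrBl divfK // -mulrA.
exact: identity.
Qed.
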